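(* Let $m>1$, $h>0$, $\Delta t>0$, let $M^*,S^*\in\mathbb{R}^{(m-1)\times(m-1)}$ be symmetric matrices and let $F\in\mathbb{R}^{m-1}$ be independent of time. Let $(U^n,\dot U^n,\ddot U^n)_{n\ge0}$ be sequences in $\mathbb{R}^{m-1}$ satisfying, for all $n\ge0$, the hybrid scheme $$U^{n+1}=U^n+\tfrac{\Delta t}{2}(\dot U^{n+1}+\dot U^n),\qquad \dot U^{n+1}=\dot U^n+\tfrac{\Delta t}{2}(\ddot U^{n+1}+\ddot U^n),$$ $$M^*\ddot U^{n+\frac12}+S^*U^{n+\frac12}=F+\frac{H(-u_1^n)}{2h}(u_1^n+u_1^{n+1})^+e_1+\frac{H(u_1^n)}{2h}\big((u_1^n)^++(u_1^{n+1})^+\big)e_1,$$ where $V^{n+\frac12}=\frac12(V^{n+1}+V^n)$, $u_1^n$ is the first component of $U^n$, $e_1=(1,0,\dots,0)^{\mathsf T}$, $s^+=\max(s,0)$, and $H(s)=1$ if $s>0$, $H(0)=\tfrac12$, $H(s)=0$ if $s<0$. Define the discrete energy $$\mathcal{E}^n=\tfrac12(\dot U^n)^{\mathsf T}M^*\dot U^n+\tfrac12(U^n)^{\mathsf T}S^*U^n-\tfrac1{2h}\big((u_1^n)^+\big)^2-(U^n)^{\mathsf T}F .$$ Then $\Delta\mathcal{E}^n:=\mathcal{E}^{n+1}-\mathcal{E}^n\le0$ for all $n>0$.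
   Context: In the paper, $M^*$ and $S^*$ are the (symmetric) reduced mass and stiffness matrices of a mass-redistributed $P_1$ finite element discretization of the 1D wave equation with a Signorini contact condition, the contact node having been eliminated; the claim only uses their symmetry. *)

From HB Require Import structures.
From mathcomp Require Import all_boot all_order all_algebra.
Set Implicit Arguments. Unset Strict Implicit. Unset Printing Implicit Defensive.
Import Order.TTheory GRing.Theory Num.Theory.
Local Open Scope ring_scope.

Section Defs.
Variable R : realFieldType.

Definition ppart (s : R) : R := Num.max s 0.

Definition heav (s : R) : R := if 0 < s then 1 else if s == 0 then 2^-1 else 0.

(* first component of a vector of R^k (0 if k = 0, never used since k = m-1 >= 1) *)
Definition comp1 (k : nat) : 'cV[R]_k -> R :=
  match k with
  | 0 => fun _ => 0
  | k'.+1 => fun V => V ord0 ord0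
  end.

Definition e1 (k : nat) : 'cV[R]_k := \col_i (if val i == 0%N then 1 else 0).

Definition qform (k : nat) (A : 'M[R]_k) (V : 'cV[R]_k) : R := (V^T *m A *m V) ord0 ord0.

Definition vdot (k : nat) (V W : 'cV[R]_k) : R := (V^T *m W) ord0 ord0.

Definition energy (k : nat) (h : R) (M S : 'M[R]_k) (F U Ud : 'cV[R]_k) : R :=
  2^-1 * qform M Ud + 2^-1 * qform S U - (2 * h)^-1 * (ppart (comp1 U)) ^+ 2
  - vdot U F.

Definition hybrid_step (k : nat) (h dt : R) (M S : 'M[R]_k) (F : 'cV[R]_k)
  (U Ud Udd : nat -> 'cV[R]_k) (n : nat) : Prop :=
  [/\ U n.+1 = U n + (dt / 2) *: (Ud n.+1 + Ud n),
      Ud n.+1 = Ud n + (dt / 2) *: (Udd n.+1 + Udd n) &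
      M *m (2^-1 *: (Udd n.+1 + Udd n)) + S *m (2^-1 *: (U n.+1 + U n)) =
        F + ((heav (- comp1 (U n)) / (2 * h)) * ppart (comp1 (U n) + comp1 (U n.+1))) *: e1 k
          + ((heav (comp1 (U n)) / (2 * h)) * (ppart (comp1 (U n)) + ppart (comp1 (U n.+1)))) *: e1 k].

End Defs.

(** The scheme is the trapezoidal rule, and [M*], [S*] are symmetric, so the
    kinetic and elastic energies change by exactly the work [(U^{n+1} - U^n)^T (F + G)]
    of the right-hand side of the balance equation.  The work of [F] cancels against
    the potential term, and [G] only acts on the first component, so the energy
    change is [1/(2h)] times the work of the contact force minus the change of the
    penalty term [((u_1)^+)^2]; that scalar inequality in [a = u_1^n], [b = u_1^{n+1}]
    is checked by cases on the signs of [a], [b] and [a + b]. *)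
From HB Require Import structures.
From mathcomp Require Import all_boot all_order all_algebra.
From mathcomp Require Import ring lra.
Set Implicit Arguments. Unset Strict Implicit. Unset Printing Implicit Defensive.
Import Order.TTheory GRing.Theory Num.Theory.
Local Open Scope ring_scope.

Section InnerProduct.
Variables (R : realFieldType) (k : nat).
Implicit Types (V W X : 'cV[R]_k) (A : 'M[R]_k).

Lemma vdotE V W : vdot V W = \sum_i V i ord0 * W i ord0.
Proof. by rewrite /vdot mxE; apply: eq_bigr => i _; rewrite mxE. Qed.

Lemma vdotDl V W X : vdot (V + W) X = vdot V X + vdot W X.
Proof. by rewrite !vdotE -big_split; apply: eq_bigr => i _; rewrite !mxE mulrDl. Qed.

Lemma vdotDr V W X : vdot X (V + W) = vdot X V + vdot X W.
Proof. by rewrite !vdotE -big_split; apply: eq_bigr => i _; rewrite !mxE mulrDr. Qed.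

Lemma vdotZl a V W : vdot (a *: V) W = a * vdot V W.
Proof. by rewrite !vdotE mulr_sumr; apply: eq_bigr => i _; rewrite !mxE mulrA. Qed.

Lemma vdotZr a V W : vdot W (a *: V) = a * vdot W V.
Proof. by rewrite !vdotE mulr_sumr; apply: eq_bigr => i _; rewrite !mxE mulrCA. Qed.

Lemma vdotNl V W : vdot (- V) W = - vdot V W.
Proof. by rewrite -scaleN1r vdotZl mulN1r. Qed.

Lemma vdot_mx_sym A V W : A^T = A -> vdot V (A *m W) = vdot W (A *m V).
Proof.
move=> symA; rewrite /vdot !mulmxA.
have -> : V^T *m A *m W = (W^T *m A *m V)^T by rewrite !trmx_mul symA trmxK mulmxA.
by rewrite mxE.
Qed.

Lemma qform_sub A V W : A^T = A ->
  qform A V - qform A W = vdot (V - W) (A *m (V + W)).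
Proof.
move=> symA; rewrite /qform -!mulmxA -/(vdot V _) -/(vdot W _).
rewrite mulmxDr vdotDl vdotNl !vdotDr (vdot_mx_sym V W symA); ring.
Qed.

End InnerProduct.

Lemma vdot_e1 (R : realFieldType) (k : nat) (V : 'cV[R]_k.+1) :
  vdot V (e1 R k.+1) = V ord0 ord0.
Proof.
rewrite vdotE (bigD1 ord0) //= big1 ?mxE ?mulr1 ?addr0 // => i /negbTE i_neq0.
by rewrite mxE -[val i == 0%N]/(i == ord0) i_neq0 mulr0.
Qed.

Section EnergyBalance.
Variables (R : realFieldType) (k : nat) (h dt : R) (M S : 'M[R]_k) (F : 'cV[R]_k).
Hypotheses (symM : M^T = M) (symS : S^T = S).

Lemma energy_trapezoidal_step (U0 U1 Ud0 Ud1 Udd G : 'cV[R]_k) :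
  U1 = U0 + (dt / 2) *: (Ud1 + Ud0) ->
  Ud1 = Ud0 + (dt / 2) *: Udd ->
  M *m (2^-1 *: Udd) + S *m (2^-1 *: (U1 + U0)) = F + G ->
  energy h M S F U1 Ud1 - energy h M S F U0 Ud0 =
    vdot (U1 - U0) G - (2 * h)^-1 * (ppart (comp1 U1) ^+ 2 - ppart (comp1 U0) ^+ 2).
Proof.
move=> dU dUd balance.
have dU' : U1 - U0 = (dt / 2) *: (Ud1 + Ud0) by rewrite dU addrAC subrr add0r.
have dUd' : Ud1 - Ud0 = (dt / 2) *: Udd by rewrite dUd addrAC subrr add0r.
have work : 2^-1 * (qform M Ud1 - qform M Ud0) + 2^-1 * (qform S U1 - qform S U0) =
    vdot (U1 - U0) (F + G).
  rewrite -balance !qform_sub // dUd' dU' !vdotDr -!scalemxAr.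
  by rewrite !vdotZl !vdotZr (vdot_mx_sym _ Udd symM); ring.
have -> : energy h M S F U1 Ud1 - energy h M S F U0 Ud0 =
    2^-1 * (qform M Ud1 - qform M Ud0) + 2^-1 * (qform S U1 - qform S U0)
    - vdot (U1 - U0) F - (2 * h)^-1 * (ppart (comp1 U1) ^+ 2 - ppart (comp1 U0) ^+ 2).
  by rewrite /energy vdotDl vdotNl; ring.
by rewrite work vdotDr; ring.
Qed.

End EnergyBalance.

Lemma contact_work_le (R : realFieldType) (a b : R) :
  (b - a) * (heav (- a) * ppart (a + b) + heav a * (ppart a + ppart b))
    <= ppart b ^+ 2 - ppart a ^+ 2.
Proof.
have ppartE (y : R) : (y <= 0 /\ ppart y = 0) \/ (0 < y /\ ppart y = y).
  by rewrite /ppart; case: (leP y 0) => hy; [left | right].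
have [[? ->]|[? ->]] := ppartE b; have [[? ->]|[? ->]] := ppartE (a + b);
rewrite /heav oppr_gt0 oppr_eq0 /ppart;
have [a_lt0|a_gt0|a_eq0] := ltrgtP a 0; rewrite ?a_eq0 ?eqxx ?ltxx /=; nra.
Qed.

Theorem lemma5p1 (R : realFieldType) (m : nat) (h dt : R)
  (M S : 'M[R]_(m.-1)) (F : 'cV[R]_(m.-1))
  (U Ud Udd : nat -> 'cV[R]_(m.-1)) :
  (1 < m)%N -> 0 < h -> 0 < dt ->
  M^T = M -> S^T = S ->
  (forall n : nat, hybrid_step h dt M S F U Ud Udd n) ->
  forall n : nat, (0 < n)%N ->
    energy h M S F (U n.+1) (Ud n.+1) - energy h M S F (U n) (Ud n) <= 0.
Proof.
case: m M S F U Ud Udd => [|[|k]] //= M S F U Ud Udd _ h_gt0 _ symM symS scheme n _.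
have [dU dUd balance] := scheme n.
rewrite -addrA -scalerDl in balance.
have inv2h_ge0 : 0 <= (2 * h)^-1 by rewrite invr_ge0 mulr_ge0 // ltW.
rewrite (energy_trapezoidal_step h symM symS dU dUd balance) vdotZr vdot_e1 subr_le0.
apply: le_trans (ler_wpM2l inv2h_ge0 (contact_work_le _ _)).
by rewrite /= !mxE le_eqVlt; apply/orP; left; apply/eqP; ring.
Qed.
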